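(* Let $p\in(0,1)$, $a>a_*:=p^p(1-p)^{1-p}$, and let $\gamma_a:\mathbb{R}\to\mathbb{S}^2$ be a $p$-elastic curve with non-constant curvature $\kappa$ satisfying the first integral with constant $a$ (so $\kappa$ is periodic with some minimal period $\varrho=\varrho(a)>0$). Then $\gamma_a$ is a closed curve if and only if $$\Lambda_p(a):=(1-p)\sqrt{a}\int_0^{\varrho}\frac{\kappa^{2-p}}{a\,\kappa^{2(1-p)}-p^2}\,ds=2\pi q$$ for some rational number $q$.
   Context: $\mathbb{S}^2$ is the unit sphere in $\mathbb{R}^3$. For an immersed arc-length parametrized curve $\gamma$ in $\mathbb{S}^2$, $T=\gamma'$, $N$ is the rotation of $T$ by $+\pi/2$ in the tangent plane, and the geodesic curvature $\kappa$ is defined by $\nabla_T T=\kappa N$. For $p\in(0,1)$, $\mathbf{\Theta}_p(\gamma)=\int_\gamma\kappa^p\,ds$ acts on convex curves ($\kappa>0$), and a $p$-elastic curve is a convex curve whose curvature satisfies $p\,(\kappa^{p-1})''+(p-1)\kappa^{p+1}+p\,\kappa^{p-1}=0$. A $p$-elastic curve with non-constant curvature satisfies, for a constant $a$, the first integral $p^2(p-1)^2\kappa^{2(p-2)}(\kappa')^2+(p-1)^2\kappa^{2p}+p^2\kappa^{2(p-1)}=a$; for $p\in(0,1)$ non-constant solutions require $a>a_*$, and such curves are defined on all of $\mathbb{R}$ with periodic curvature. *)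

From Stdlib Require Import Reals QArith Qreals.
From Coquelicot Require Import Coquelicot.
Open Scope R_scope.

Definition v3 : Type := (R * R * R)%type.
Definition cx (v : v3) : R := fst (fst v).
Definition cy (v : v3) : R := snd (fst v).
Definition cz (v : v3) : R := snd v.

Definition dot (u v : v3) : R := cx u * cx v + cy u * cy v + cz u * cz v.
Definition cross (u v : v3) : v3 :=
  (cy u * cz v - cz u * cy v, cz u * cx v - cx u * cz v, cx u * cy v - cy u * cx v).

Definition dcurve (g : R -> v3) : R -> v3 :=
  fun s => (Derive (fun t => cx (g t)) s,
            Derive (fun t => cy (g t)) s,
            Derive (fun t => cz (g t)) s).

Definition smooth_curve (g : R -> v3) : Prop :=
  forall (n : nat) (s : R),
    ex_derive (Derive_n (fun t => cx (g t)) n) s /\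
    ex_derive (Derive_n (fun t => cy (g t)) n) s /\
    ex_derive (Derive_n (fun t => cz (g t)) n) s.

Definition on_sphere (g : R -> v3) : Prop := forall s, dot (g s) (g s) = 1.

Definition arclength (g : R -> v3) : Prop :=
  forall s, dot (dcurve g s) (dcurve g s) = 1.

(* T = gamma', N = rotation of T by +pi/2 in T_gamma S^2 (outward orientation):
   N = gamma x T. *)
Definition tangent (g : R -> v3) : R -> v3 := dcurve g.
Definition normal (g : R -> v3) : R -> v3 := fun s => cross (g s) (tangent g s).

(* Geodesic curvature: nabla_T T = (tangential part of gamma'') = kappa N,
   so kappa = <gamma'', N> (gamma'' - its tangential part is normal to S^2,
   hence orthogonal to N). *)
Definition geod_curv (g : R -> v3) : R -> R :=
  fun s => dot (dcurve (dcurve g) s) (normal g s).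

Definition convex_curve (g : R -> v3) : Prop := forall s, 0 < geod_curv g s.

Definition p_elastic (p : R) (g : R -> v3) : Prop :=
  smooth_curve g /\ on_sphere g /\ arclength g /\ convex_curve g /\
  forall s,
    p * Derive_n (fun t => Rpower (geod_curv g t) (p - 1)) 2 s
    + (p - 1) * Rpower (geod_curv g s) (p + 1)
    + p * Rpower (geod_curv g s) (p - 1) = 0.

Definition first_integral (p a : R) (k : R -> R) : Prop :=
  forall s,
    p ^ 2 * (p - 1) ^ 2 * Rpower (k s) (2 * (p - 2)) * (Derive k s) ^ 2
    + (p - 1) ^ 2 * Rpower (k s) (2 * p)
    + p ^ 2 * Rpower (k s) (2 * (p - 1)) = a.

Definition minimal_period (f : R -> R) (rho : R) : Prop :=
  0 < rho /\ (forall s, f (s + rho) = f s) /\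
  (forall t, 0 < t < rho -> exists s, f (s + t) <> f s).

Definition closed_curve (g : R -> v3) : Prop :=
  exists L, 0 < L /\ forall s, g (s + L) = g s.

Definition a_star (p : R) : R := Rpower p p * Rpower (1 - p) (1 - p).

Definition Lambda (p a rho : R) (k : R -> R) : R :=
  (1 - p) * sqrt a *
  RInt (fun s => Rpower (k s) (2 - p) / (a * Rpower (k s) (2 * (1 - p)) - p ^ 2)) 0 rho.

(* A p-elastic curve is invariant under the rotations generated by its Killing field
   [J = p k^(p-1) g + p (k^(p-1))' T + (1-p) k^p N]: the Euler-Lagrange equation makes [J]
   constant along the curve, and the first integral says [|J|^2 = a].  In cylindrical
   coordinates about the axis [e = J / sqrt a], the height [<g, e> = p k^(p-1) / sqrt a] is a
   function of the curvature, while the polar angle has derivative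
   [<N, e> / (1 - <g, e>^2) = (1-p) sqrt a k^(2-p) / (a k^(2(1-p)) - p^2)], so it advances by
   [Lambda_p(a)] over each period of [k].  Any period of the curve is a period [n rho] of [k],
   and the curve closes up after [n rho] exactly when [n Lambda_p(a)] is a multiple of [2 pi]. *)

From Stdlib Require Import Reals QArith Qreals ZArith Lra Lia FunctionalExtensionality.
From Coquelicot Require Import Coquelicot.
Open Scope R_scope.

(* Coquelicot states many equations at aliases of [R] that [ring] does not recognise. *)
Ltac ring_R := simpl; match goal with |- ?x = ?y => change (@eq R x y) end; ring.

Lemma is_derive_Rplus f g s df dg :
  is_derive f s df -> is_derive g s dg -> is_derive (fun t => f t + g t) s (df + dg).
Proof. intros; apply (is_derive_plus f g); auto. Qed.

Lemma is_derive_Rminus f g s df dg :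
  is_derive f s df -> is_derive g s dg -> is_derive (fun t => f t - g t) s (df - dg).
Proof. intros; apply (is_derive_minus f g); auto. Qed.

Lemma is_derive_Rmult f g s df dg :
  is_derive f s df -> is_derive g s dg -> is_derive (fun t => f t * g t) s (df * g s + f s * dg).
Proof. intros; apply (is_derive_mult f g); auto. intros; apply Rmult_comm. Qed.

Lemma is_derive_Rconst (c s : R) : is_derive (fun _ : R => c) s 0.
Proof. apply (is_derive_const c). Qed.

Lemma is_derive_eq_val (f : R -> R) s df df' : is_derive f s df -> df = df' -> is_derive f s df'.
Proof. intros H ->; auto. Qed.

Lemma is_derive_shift (f : R -> R) L s df :
  is_derive f (s + L) df -> is_derive (fun t => f (t + L)) s df.
Proof.
  intros H. eapply is_derive_eq_val.
  - apply (is_derive_comp f (fun t => t + L) s); [exact H|].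
    apply is_derive_Rplus; [apply (is_derive_id (K := R_AbsRing))|apply is_derive_Rconst].
  - unfold scal, one; simpl; unfold mult; simpl. ring_R.
Qed.

Lemma is_derive_Rpower_comp (f : R -> R) s df c : is_derive f s df -> 0 < f s ->
  is_derive (fun t => Rpower (f t) c) s (c * Rpower (f s) (c - 1) * df).
Proof.
  intros H P. eapply is_derive_eq_val.
  - apply (is_derive_comp (fun x => Rpower x c) f s); [|exact H].
    apply is_derive_Reals, derivable_pt_lim_power; auto.
  - unfold scal; simpl; unfold mult; simpl. ring_R.
Qed.

Lemma is_derive_cos_comp th s dth : is_derive th s dth -> is_derive (fun t => cos (th t)) s (- sin (th s) * dth).
Proof.
  intros H. eapply is_derive_eq_val.
  - apply (is_derive_comp cos th s); [|exact H]. apply is_derive_Reals, derivable_pt_lim_cos.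
  - unfold scal; simpl; unfold mult; simpl. ring_R.
Qed.

Lemma is_derive_sin_comp th s dth : is_derive th s dth -> is_derive (fun t => sin (th t)) s (cos (th s) * dth).
Proof.
  intros H. eapply is_derive_eq_val.
  - apply (is_derive_comp sin th s); [|exact H]. apply is_derive_Reals, derivable_pt_lim_sin.
  - unfold scal; simpl; unfold mult; simpl. ring_R.
Qed.

Lemma is_derive_zero_const (f : R -> R) : (forall s, is_derive f s 0) -> forall s t, f s = f t.
Proof.
  intros H s t. destruct (Rtotal_order s t) as [Hl|[He|Hl]].
  - apply (eq_is_derive f s t); auto.
  - subst; auto.
  - symmetry; apply (eq_is_derive f t s); auto.
Qed.

Lemma is_derive_of_const (f : R -> R) c s df : (forall t, f t = c) -> is_derive f s df -> df = 0.
Proof.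
  intros E H. apply is_derive_unique in H. rewrite <- H.
  rewrite (Derive_ext f (fun _ => c)); auto. apply Derive_const.
Qed.

Lemma is_derive_periodic_increment (f f' : R -> R) L :
  (forall s, is_derive f s (f' s)) -> (forall s, f' (s + L) = f' s) ->
  forall s, f (s + L) = f s + f L - f 0.
Proof.
  intros Df P s.
  assert (D : forall u, is_derive (fun t => f (t + L) - f t) u 0).
  { intros u. eapply is_derive_eq_val.
    - apply is_derive_Rminus; [apply is_derive_shift|]; apply Df.
    - rewrite P; ring_R. }
  pose proof (is_derive_zero_const _ D s 0) as E. simpl in E.
  rewrite Rplus_0_l in E. lra.
Qed.

Fixpoint Cn (n : nat) (f : R -> R) : Prop :=
  match n with O => True | S n => (forall x, ex_derive f x) /\ Cn n (Derive f) end.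

Definition Cinf (f : R -> R) : Prop := forall n, Cn n f.

Lemma Cn_S_Cn n : forall f, Cn (S n) f -> Cn n f.
Proof. induction n; intros f H; simpl in *; auto. destruct H; split; auto. Qed.

Lemma Cn_plus n : forall f g, Cn n f -> Cn n g -> Cn n (fun t => f t + g t).
Proof.
  induction n; intros f g Hf Hg; simpl in *; auto.
  destruct Hf as [Ef Df], Hg as [Eg Dg]. split.
  - intros; apply (ex_derive_plus f g); auto.
  - replace (Derive (fun t => f t + g t)) with (fun t => Derive f t + Derive g t); auto.
    apply functional_extensionality; intros; symmetry; apply Derive_plus; auto.
Qed.

Lemma Cn_minus n : forall f g, Cn n f -> Cn n g -> Cn n (fun t => f t - g t).
Proof.
  induction n; intros f g Hf Hg; simpl in *; auto.
  destruct Hf as [Ef Df], Hg as [Eg Dg]. split.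
  - intros; apply (ex_derive_minus f g); auto.
  - replace (Derive (fun t => f t - g t)) with (fun t => Derive f t - Derive g t); auto.
    apply functional_extensionality; intros; symmetry; apply Derive_minus; auto.
Qed.

Lemma Cn_mult n : forall f g, Cn n f -> Cn n g -> Cn n (fun t => f t * g t).
Proof.
  induction n; intros f g Hf Hg; simpl; auto.
  pose proof (Cn_S_Cn _ _ Hf) as Hf'. pose proof (Cn_S_Cn _ _ Hg) as Hg'.
  destruct Hf as [Ef Df], Hg as [Eg Dg]. split.
  - intros; apply (ex_derive_mult f g); auto.
  - replace (Derive (fun t => f t * g t)) with (fun t => Derive f t * g t + f t * Derive g t).
    + apply Cn_plus; apply IHn; auto.
    + apply functional_extensionality; intros; symmetry; apply Derive_mult; auto.
Qed.

Lemma Cinf_plus f g : Cinf f -> Cinf g -> Cinf (fun t => f t + g t).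
Proof. intros ? ? n; apply Cn_plus; auto. Qed.
Lemma Cinf_minus f g : Cinf f -> Cinf g -> Cinf (fun t => f t - g t).
Proof. intros ? ? n; apply Cn_minus; auto. Qed.
Lemma Cinf_mult f g : Cinf f -> Cinf g -> Cinf (fun t => f t * g t).
Proof. intros ? ? n; apply Cn_mult; auto. Qed.
Lemma Cinf_Derive f : Cinf f -> Cinf (Derive f).
Proof. intros H n. apply (H (S n)). Qed.
Lemma Cinf_ex_derive f x : Cinf f -> ex_derive f x.
Proof. intros H. apply (H 1%nat). Qed.

Lemma Cinf_of_ex_derive_n f : (forall m x, ex_derive (Derive_n f m) x) -> Cinf f.
Proof.
  intros H n. revert f H. induction n; intros f H; simpl; auto. split.
  - intros; apply (H O).
  - apply IHn. intros m x.
    eapply ex_derive_ext; [|apply (H (S m) x)].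
    intros t. rewrite <- Nat.add_1_r. symmetry. apply (Derive_n_comp f m 1).
Qed.

Definition vadd (u v : v3) : v3 := (cx u + cx v, cy u + cy v, cz u + cz v).
Definition vsub (u v : v3) : v3 := (cx u - cx v, cy u - cy v, cz u - cz v).
Definition vscale (c : R) (u : v3) : v3 := (c * cx u, c * cy u, c * cz u).
Definition vzero : v3 := (0, 0, 0).
Definition lincomb3 (c1 : R) (u : v3) (c2 : R) (v : v3) (c3 : R) (w : v3) : v3 :=
  vadd (vadd (vscale c1 u) (vscale c2 v)) (vscale c3 w).

Ltac v3_unfold :=
  repeat match goal with
  | u : v3 |- _ => let a := fresh "a" in let b := fresh "b" in let c := fresh "c" in
                   destruct u as [[a b] c]
  end;
  unfold lincomb3, vadd, vsub, vscale, vzero, dot, cross, cx, cy, cz in *; simpl in *.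

Ltac v3_ring :=
  v3_unfold; match goal with |- (_, _, _) = _ => f_equal; [f_equal|] | _ => idtac end; ring.

Lemma v3_ext (u v : v3) : cx u = cx v -> cy u = cy v -> cz u = cz v -> u = v.
Proof. destruct u as [[? ?] ?], v as [[? ?] ?]; unfold cx, cy, cz; simpl; intros; subst; auto. Qed.

Lemma dot_comm u v : dot u v = dot v u. Proof. v3_ring. Qed.
Lemma dot_vaddl u v w : dot (vadd u v) w = dot u w + dot v w. Proof. v3_ring. Qed.
Lemma dot_vsubl u v w : dot (vsub u v) w = dot u w - dot v w. Proof. v3_ring. Qed.
Lemma dot_vscalel c u w : dot (vscale c u) w = c * dot u w. Proof. v3_ring. Qed.
Lemma dot_vzeror u : dot u vzero = 0. Proof. v3_ring. Qed.
Lemma dot_lincomb3l c1 u c2 v c3 w x :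
  dot (lincomb3 c1 u c2 v c3 w) x = c1 * dot u x + c2 * dot v x + c3 * dot w x.
Proof. v3_ring. Qed.
Lemma dot_lincomb3r c1 u c2 v c3 w x :
  dot x (lincomb3 c1 u c2 v c3 w) = c1 * dot x u + c2 * dot x v + c3 * dot x w.
Proof. v3_ring. Qed.
Lemma dot_crossl u v : dot (cross u v) u = 0. Proof. v3_ring. Qed.
Lemma dot_crossr u v : dot (cross u v) v = 0. Proof. v3_ring. Qed.
Lemma dot_cross_cross u v : dot (cross u v) (cross u v) = dot u u * dot v v - dot u v ^ 2.
Proof. v3_ring. Qed.
Lemma cross_crossl u v w : cross (cross u v) w = vsub (vscale (dot u w) v) (vscale (dot v w) u).
Proof. v3_ring. Qed.
Lemma vscaleA r c u : vscale r (vscale c u) = vscale (r * c) u. Proof. v3_ring. Qed.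
Lemma vscale1 u : vscale 1 u = u. Proof. v3_ring. Qed.

Lemma dot_self_eq0 u : dot u u = 0 -> u = vzero.
Proof.
  v3_unfold. intros H.
  assert (a = 0) by nra. assert (b = 0) by nra. assert (c = 0) by nra. subst; auto.
Qed.

Lemma vsub_eq0 u v : vsub u v = vzero -> u = v.
Proof.
  intros H. apply v3_ext; unfold vsub, vzero, cx, cy, cz in *; simpl in *; injection H; lra.
Qed.

Definition orthonormal2 (u v : v3) : Prop := dot u u = 1 /\ dot v v = 1 /\ dot u v = 0.

Lemma orthonormal2_cross u v : orthonormal2 u v ->
  dot (cross u v) (cross u v) = 1 /\ dot (cross u v) u = 0 /\ dot (cross u v) v = 0.
Proof.
  intros [Hu [Hv Huv]]. rewrite dot_cross_cross, Hu, Hv, Huv, dot_crossl, dot_crossr.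
  repeat split; ring.
Qed.

Lemma orthonormal2_decomp u v x : orthonormal2 u v ->
  x = lincomb3 (dot x u) u (dot x v) v (dot x (cross u v)) (cross u v).
Proof.
  intros Huv. pose proof Huv as [Hu [Hv Hu_v]].
  destruct (orthonormal2_cross u v Huv) as [Hn [Hnu Hnv]].
  set (n := cross u v) in *.
  set (w := vsub x (lincomb3 (dot x u) u (dot x v) v (dot x n) n)).
  assert (wu : dot w u = 0).
  { unfold w; rewrite dot_vsubl, dot_lincomb3l, Hu, (dot_comm v u), Hu_v, Hnu. ring. }
  assert (wv : dot w v = 0).
  { unfold w; rewrite dot_vsubl, dot_lincomb3l, Hv, Hu_v, Hnv. ring. }
  assert (wn : dot w n = 0).
  { unfold w; rewrite dot_vsubl, dot_lincomb3l, Hn, (dot_comm u n), Hnu, (dot_comm v n), Hnv. ring. }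
  (* Lagrange's identity: [|w|^2 = |(u x v) x w|^2 = |(u.w) v - (v.w) u|^2 = 0]. *)
  assert (ww : dot w w = 0).
  { pose proof (dot_cross_cross n w) as L. rewrite Hn, (dot_comm n w), wn in L.
    unfold n in L at 1 2. rewrite !cross_crossl, (dot_comm u w), wu, (dot_comm v w), wv in L.
    replace (vsub (vscale 0 v) (vscale 0 u)) with vzero in L by v3_ring.
    rewrite dot_vzeror in L. lra. }
  apply vsub_eq0, dot_self_eq0, ww.
Qed.

Lemma orthonormal2_coords u v a b c : orthonormal2 u v ->
  dot u (lincomb3 a u b v c (cross u v)) = a /\
  dot (cross u v) (lincomb3 a u b v c (cross u v)) = c /\
  dot (lincomb3 a u b v c (cross u v)) (lincomb3 a u b v c (cross u v)) = a ^ 2 + b ^ 2 + c ^ 2.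
Proof.
  intros Huv. pose proof Huv as [Hu [Hv Hu_v]].
  destruct (orthonormal2_cross u v Huv) as [Hn [Hnu Hnv]].
  rewrite !dot_lincomb3r, !dot_lincomb3l, Hu, Hv, Hn, Hu_v, Hnu, Hnv,
    (dot_comm v u), (dot_comm u (cross u v)), (dot_comm v (cross u v)), Hu_v, Hnu, Hnv.
  repeat split; ring.
Qed.

Definition is_derive_v3 (V V' : R -> v3) : Prop := forall s,
  is_derive (fun t => cx (V t)) s (cx (V' s)) /\
  is_derive (fun t => cy (V t)) s (cy (V' s)) /\
  is_derive (fun t => cz (V t)) s (cz (V' s)).

Lemma is_derive_v3_ext V W W' : is_derive_v3 V W -> (forall s, W s = W' s) -> is_derive_v3 V W'.
Proof. intros H E s; rewrite <- E; auto. Qed.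

Lemma is_derive_v3_const (c : v3) : is_derive_v3 (fun _ => c) (fun _ => vzero).
Proof. intros s; unfold vzero, cx, cy, cz; simpl; split; [|split]; apply is_derive_Rconst. Qed.

Lemma is_derive_v3_add U U' V V' : is_derive_v3 U U' -> is_derive_v3 V V' ->
  is_derive_v3 (fun t => vadd (U t) (V t)) (fun s => vadd (U' s) (V' s)).
Proof.
  intros HU HV s. destruct (HU s) as [U1 [U2 U3]], (HV s) as [V1 [V2 V3]].
  unfold vadd, cx, cy, cz in *; simpl. split; [|split]; apply is_derive_Rplus; eauto.
Qed.

Lemma is_derive_v3_sub U U' V V' : is_derive_v3 U U' -> is_derive_v3 V V' ->
  is_derive_v3 (fun t => vsub (U t) (V t)) (fun s => vsub (U' s) (V' s)).
Proof.
  intros HU HV s. destruct (HU s) as [U1 [U2 U3]], (HV s) as [V1 [V2 V3]].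
  unfold vsub, cx, cy, cz in *; simpl. split; [|split]; apply is_derive_Rminus; eauto.
Qed.

Lemma is_derive_v3_scale f f' V V' : (forall s, is_derive f s (f' s)) -> is_derive_v3 V V' ->
  is_derive_v3 (fun t => vscale (f t) (V t)) (fun s => vadd (vscale (f' s) (V s)) (vscale (f s) (V' s))).
Proof.
  intros Hf HV s. destruct (HV s) as [V1 [V2 V3]].
  unfold vscale, vadd, cx, cy, cz in *; simpl.
  split; [|split]; (eapply is_derive_eq_val; [apply is_derive_Rmult; eauto|ring_R]).
Qed.

Lemma is_derive_v3_cross U U' V V' : is_derive_v3 U U' -> is_derive_v3 V V' ->
  is_derive_v3 (fun t => cross (U t) (V t)) (fun s => vadd (cross (U' s) (V s)) (cross (U s) (V' s))).
Proof.
  intros HU HV s. destruct (HU s) as [U1 [U2 U3]], (HV s) as [V1 [V2 V3]].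
  unfold cross, vadd, cx, cy, cz in *; simpl.
  split; [|split]; (eapply is_derive_eq_val; [apply is_derive_Rminus; apply is_derive_Rmult; eauto|ring_R]).
Qed.

Lemma is_derive_dot U U' V V' s : is_derive_v3 U U' -> is_derive_v3 V V' ->
  is_derive (fun t => dot (U t) (V t)) s (dot (U' s) (V s) + dot (U s) (V' s)).
Proof.
  intros HU HV. destruct (HU s) as [U1 [U2 U3]], (HV s) as [V1 [V2 V3]].
  unfold dot. eapply is_derive_eq_val.
  - apply is_derive_Rplus; [apply is_derive_Rplus|]; apply is_derive_Rmult; eauto.
  - ring_R.
Qed.

Lemma is_derive_lincomb3 a a' U U' b b' V V' c c' W W' :
  (forall s, is_derive a s (a' s)) -> (forall s, is_derive b s (b' s)) ->
  (forall s, is_derive c s (c' s)) ->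
  is_derive_v3 U U' -> is_derive_v3 V V' -> is_derive_v3 W W' ->
  is_derive_v3 (fun t => lincomb3 (a t) (U t) (b t) (V t) (c t) (W t))
    (fun s => vadd (vadd (vadd (vscale (a' s) (U s)) (vscale (a s) (U' s)))
                         (vadd (vscale (b' s) (V s)) (vscale (b s) (V' s))))
                   (vadd (vscale (c' s) (W s)) (vscale (c s) (W' s)))).
Proof.
  intros. unfold lincomb3.
  apply (is_derive_v3_add (fun t => vadd (vscale (a t) (U t)) (vscale (b t) (V t))) _
                          (fun t => vscale (c t) (W t)));
    [apply (is_derive_v3_add (fun t => vscale (a t) (U t)) _ (fun t => vscale (b t) (V t)))|];
    apply is_derive_v3_scale; auto.
Qed.

Lemma is_derive_v3_zero_const V : is_derive_v3 V (fun _ => vzero) -> forall s, V s = V 0.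
Proof.
  intros H s. apply v3_ext;
    [apply (is_derive_zero_const (fun t => cx (V t)))
    |apply (is_derive_zero_const (fun t => cy (V t)))
    |apply (is_derive_zero_const (fun t => cz (V t)))];
    intros t; apply (H t).
Qed.

Lemma is_derive_v3_dcurve G :
  (forall s, ex_derive (fun t => cx (G t)) s) -> (forall s, ex_derive (fun t => cy (G t)) s) ->
  (forall s, ex_derive (fun t => cz (G t)) s) -> is_derive_v3 G (dcurve G).
Proof.
  intros H1 H2 H3 s. unfold dcurve, cx, cy, cz in *; simpl.
  split; [|split]; apply Derive_correct; auto.
Qed.

Lemma Derive_periodic (f : R -> R) L s :
  (forall t, f (t + L) = f t) -> ex_derive f (s + L) -> Derive f (s + L) = Derive f s.
Proof.
  intros P [d H]. rewrite (is_derive_unique _ _ _ H). symmetry. apply is_derive_unique.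
  eapply is_derive_ext; [intros; apply P|]. apply is_derive_shift; auto.
Qed.

Lemma dcurve_periodic (G : R -> v3) L : (forall t, G (t + L) = G t) -> is_derive_v3 G (dcurve G) ->
  forall s, dcurve G (s + L) = dcurve G s.
Proof.
  intros P D s. destruct (D (s + L)) as [D1 [D2 D3]]. unfold dcurve.
  rewrite !(Derive_periodic _ L s); try (intros; rewrite P; reflexivity); eexists; eauto.
Qed.

Definition Cinf_v3 (U : R -> v3) : Prop :=
  Cinf (fun t => cx (U t)) /\ Cinf (fun t => cy (U t)) /\ Cinf (fun t => cz (U t)).

Lemma smooth_curve_Cinf_v3 g : smooth_curve g -> Cinf_v3 g.
Proof. intros H. split; [|split]; apply Cinf_of_ex_derive_n; intros m x; apply (H m x). Qed.

Lemma Cinf_v3_dcurve G : Cinf_v3 G -> Cinf_v3 (dcurve G).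
Proof.
  intros [A [B C]]. unfold Cinf_v3, dcurve, cx, cy, cz in *; simpl.
  split; [|split]; apply Cinf_Derive; auto.
Qed.

Lemma Cinf_v3_is_derive G : Cinf_v3 G -> is_derive_v3 G (dcurve G).
Proof. intros [A [B C]]. apply is_derive_v3_dcurve; intros; apply Cinf_ex_derive; auto. Qed.

Lemma Cinf_dot U V : Cinf_v3 U -> Cinf_v3 V -> Cinf (fun t => dot (U t) (V t)).
Proof. intros [A [B C]] [D [E F]]. unfold dot. repeat apply Cinf_plus; apply Cinf_mult; auto. Qed.

Lemma Cinf_v3_cross U V : Cinf_v3 U -> Cinf_v3 V -> Cinf_v3 (fun t => cross (U t) (V t)).
Proof.
  intros [A [B C]] [D [E F]]. unfold cross, Cinf_v3, cx, cy, cz in *; simpl.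
  split; [|split]; apply Cinf_minus; apply Cinf_mult; auto.
Qed.

Lemma Cinf_geod_curv g : smooth_curve g -> Cinf (geod_curv g).
Proof.
  intros Hs. pose proof (smooth_curve_Cinf_v3 g Hs) as Cg.
  pose proof (Cinf_v3_dcurve g Cg) as CT.
  apply Cinf_dot; [apply Cinf_v3_dcurve; auto|apply Cinf_v3_cross; auto].
Qed.

Lemma geod_curv_periodic g L : smooth_curve g -> (forall t, g (t + L) = g t) ->
  forall s, geod_curv g (s + L) = geod_curv g s.
Proof.
  intros Hs P s. pose proof (smooth_curve_Cinf_v3 g Hs) as Cg.
  pose proof (Cinf_v3_dcurve g Cg) as CT.
  assert (PT : forall t, dcurve g (t + L) = dcurve g t).
  { apply dcurve_periodic, Cinf_v3_is_derive; auto. }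
  assert (PA : forall t, dcurve (dcurve g) (t + L) = dcurve (dcurve g) t).
  { apply dcurve_periodic, Cinf_v3_is_derive; auto. }
  unfold geod_curv, normal, tangent. rewrite P, PT, PA. reflexivity.
Qed.

(** * The moving frame of a spherical curve *)

Section SphericalFrame.

Variable g : R -> v3.
Hypothesis g_smooth : smooth_curve g.
Hypothesis g_sphere : on_sphere g.
Hypothesis g_unit_speed : arclength g.

Let T := dcurve g.
Let N := normal g.
Let k := geod_curv g.

Lemma is_derive_curve : is_derive_v3 g T.
Proof. apply Cinf_v3_is_derive, smooth_curve_Cinf_v3; auto. Qed.

Let is_derive_T : is_derive_v3 T (dcurve T).
Proof. apply Cinf_v3_is_derive, Cinf_v3_dcurve, smooth_curve_Cinf_v3; auto. Qed.

Lemma frame_orthonormal s : orthonormal2 (g s) (T s).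
Proof.
  split; [apply g_sphere|split; [apply g_unit_speed|]].
  pose proof (is_derive_dot _ _ _ _ s is_derive_curve is_derive_curve) as D.
  apply (is_derive_of_const _ 1) in D; [|intros; apply g_sphere].
  pose proof (dot_comm (g s) (T s)); lra.
Qed.

Let dot_tangent_accel s : dot (T s) (dcurve T s) = 0.
Proof.
  pose proof (is_derive_dot _ _ _ _ s is_derive_T is_derive_T) as D.
  apply (is_derive_of_const _ 1) in D; [|intros; apply g_unit_speed].
  pose proof (dot_comm (T s) (dcurve T s)); lra.
Qed.

Let dot_curve_accel s : dot (g s) (dcurve T s) = -1.
Proof.
  pose proof (is_derive_dot _ _ _ _ s is_derive_curve is_derive_T) as D.
  apply (is_derive_of_const _ 0) in D; [|intros; apply frame_orthonormal].
  rewrite g_unit_speed in D. lra.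
Qed.

Let accel_frame s : dcurve T s = lincomb3 (-1) (g s) 0 (T s) (k s) (N s).
Proof.
  rewrite (orthonormal2_decomp (g s) (T s) (dcurve T s)) at 1 by apply frame_orthonormal.
  rewrite (dot_comm _ (g s)), dot_curve_accel, (dot_comm _ (T s)), dot_tangent_accel.
  reflexivity.
Qed.

Lemma is_derive_tangent : is_derive_v3 T (fun s => lincomb3 (-1) (g s) 0 (T s) (k s) (N s)).
Proof. eapply is_derive_v3_ext; [apply is_derive_T|apply accel_frame]. Qed.

Lemma is_derive_normal : is_derive_v3 N (fun s => vscale (- k s) (T s)).
Proof.
  eapply is_derive_v3_ext; [apply (is_derive_v3_cross g T T (dcurve T) is_derive_curve is_derive_T)|].
  intros s. simpl. rewrite accel_frame.
  destruct (frame_orthonormal s) as [Hg [_ HgT]]. unfold N, normal, tangent. fold T.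
  transitivity (vsub (vscale (k s * dot (g s) (T s)) (g s)) (vscale (k s * dot (g s) (g s)) (T s)));
    [v3_ring|].
  rewrite Hg, HgT. v3_ring.
Qed.

End SphericalFrame.

(** * The Killing field of a p-elastic curve *)

Lemma is_derive_Rpower_Cinf k c s : Cinf k -> (forall t, 0 < k t) ->
  is_derive (fun t => Rpower (k t) c) s (c * Rpower (k s) (c - 1) * Derive k s).
Proof. intros Ck Pk. apply is_derive_Rpower_comp; auto. apply Derive_correct, Cinf_ex_derive; auto. Qed.

Lemma ex_derive_Derive_Rpower_Cinf k c s : Cinf k -> (forall t, 0 < k t) ->
  ex_derive (Derive (fun t => Rpower (k t) c)) s.
Proof.
  intros Ck Pk.
  replace (Derive (fun t => Rpower (k t) c)) with (fun t => c * Rpower (k t) (c - 1) * Derive k t).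
  - eexists. apply is_derive_Rmult; [apply is_derive_Rmult; [apply is_derive_Rconst|]|].
    + apply is_derive_Rpower_Cinf; auto.
    + apply Derive_correct, Cinf_ex_derive, Cinf_Derive; auto.
  - apply functional_extensionality; intros t.
    symmetry; apply is_derive_unique, is_derive_Rpower_Cinf; auto.
Qed.

Lemma Rpower_mult_self x c : 0 < x -> Rpower x c * x = Rpower x (c + 1).
Proof. intros; rewrite Rpower_plus, Rpower_1; auto. Qed.

Lemma Rpower_double x c : Rpower x (2 * c) = Rpower x c ^ 2.
Proof. replace (2 * c) with (c + c) by ring. rewrite Rpower_plus; ring. Qed.

Lemma Rpower_pos x c : 0 < Rpower x c.
Proof. apply exp_pos. Qed.

Lemma Rpower_exponent_eq x c d : c = d -> Rpower x c = Rpower x d.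
Proof. intros ->; auto. Qed.

Definition killing_field (p : R) (g : R -> v3) (s : R) : v3 :=
  lincomb3 (p * Rpower (geod_curv g s) (p - 1)) (g s)
           (p * Derive (fun t => Rpower (geod_curv g t) (p - 1)) s) (dcurve g s)
           ((1 - p) * Rpower (geod_curv g s) p) (normal g s).

Lemma lincomb3_frame_derivative (G T N : v3) (A A' B B' C C' k : R) :
  vadd (vadd (vadd (vscale A' G) (vscale A T)) (vadd (vscale B' T) (vscale B (lincomb3 (-1) G 0 T k N))))
       (vadd (vscale C' N) (vscale C (vscale (- k) T)))
  = lincomb3 (A' - B) G (A + B' - C * k) T (B * k + C') N.
Proof. v3_ring. Qed.

Section KillingField.

Variables (p a : R) (g : R -> v3).
Hypothesis g_elastic : p_elastic p g.

Let k := geod_curv g.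

Let k_smooth : Cinf k.
Proof. apply Cinf_geod_curv, g_elastic. Qed.

Let k_pos : forall t, 0 < k t.
Proof. apply g_elastic. Qed.

Let Derive_kpow s :
  Derive (fun t => Rpower (k t) (p - 1)) s = (p - 1) * Rpower (k s) (p - 2) * Derive k s.
Proof.
  apply is_derive_unique. eapply is_derive_eq_val; [apply is_derive_Rpower_Cinf; auto|].
  replace (p - 1 - 1) with (p - 2) by ring. reflexivity.
Qed.

Lemma killing_field_constant s : killing_field p g s = killing_field p g 0.
Proof.
  destruct g_elastic as [Hs [Hsp [Hal [_ Hode]]]].
  apply is_derive_v3_zero_const. unfold killing_field. fold k.
  eapply is_derive_v3_ext.
  - apply is_derive_lincomb3 with
      (a' := fun s => p * Derive (fun t => Rpower (k t) (p - 1)) s)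
      (b' := fun s => p * Derive (Derive (fun t => Rpower (k t) (p - 1))) s)
      (c' := fun s => (1 - p) * (p * Rpower (k s) (p - 1) * Derive k s)).
    + intros t. apply is_derive_scal, Derive_correct. eexists; apply is_derive_Rpower_Cinf; auto.
    + intros t. apply is_derive_scal, Derive_correct, ex_derive_Derive_Rpower_Cinf; auto.
    + intros t. apply is_derive_scal, is_derive_Rpower_Cinf; auto.
    + apply is_derive_curve; auto.
    + apply is_derive_tangent; auto.
    + apply is_derive_normal; auto.
  - intros t. cbv beta. rewrite lincomb3_frame_derivative.
    replace vzero with (lincomb3 0 (g t) 0 (dcurve g t) 0 (normal g t)) by v3_ring.
    pose proof (Hode t) as O. fold k in O. change (Derive_n ?f 2 t) with (Derive (Derive f) t) in O.
    rewrite Derive_kpow.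
    assert (E1 : Rpower (k t) p * k t = Rpower (k t) (p + 1)) by (apply Rpower_mult_self; auto).
    assert (E2 : Rpower (k t) (p - 2) * k t = Rpower (k t) (p - 1)).
    { rewrite Rpower_mult_self; auto. apply Rpower_exponent_eq; ring. }
    (* The [T]-coefficient of [J'] vanishes by the Euler-Lagrange equation, the others identically. *)
    fold k. f_equal; [ring_R| |rewrite <- E2; ring_R].
    rewrite <- E1 in O. lra.
Qed.

Lemma killing_field_coords s :
  dot (g s) (killing_field p g s) = p * Rpower (k s) (p - 1) /\
  dot (normal g s) (killing_field p g s) = (1 - p) * Rpower (k s) p /\
  dot (killing_field p g s) (killing_field p g s) =
    (p * Rpower (k s) (p - 1)) ^ 2 + (p * (p - 1) * Rpower (k s) (p - 2) * Derive k s) ^ 2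
    + ((1 - p) * Rpower (k s) p) ^ 2.
Proof.
  destruct g_elastic as [Hs [Hsp [Hal _]]].
  destruct (orthonormal2_coords (g s) (dcurve g s) (p * Rpower (k s) (p - 1))
    (p * Derive (fun t => Rpower (k t) (p - 1)) s) ((1 - p) * Rpower (k s) p))
    as [C1 [C2 C3]]; [apply frame_orthonormal; auto|].
  unfold killing_field, normal, tangent. fold k. rewrite C1, C2, C3, Derive_kpow.
  repeat split; ring.
Qed.

Hypothesis k_first_integral : first_integral p a k.

Lemma killing_field_norm s : dot (killing_field p g s) (killing_field p g s) = a.
Proof.
  destruct (killing_field_coords s) as [_ [_ ->]]. rewrite <- (k_first_integral s).
  rewrite !Rpower_double. ring.
Qed.

Lemma killing_field_curve_coord_bound s : p <> 1 -> (p * Rpower (k s) (p - 1)) ^ 2 < a.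
Proof.
  intros Hp. rewrite <- (killing_field_norm s).
  destruct (killing_field_coords s) as [_ [_ ->]].
  assert (Hc : (1 - p) * Rpower (k s) p <> 0).
  { apply Rmult_integral_contrapositive_currified; [intro; apply Hp; lra|apply Rgt_not_eq, Rpower_pos]. }
  pose proof (Rlt_0_sqr _ Hc). unfold Rsqr in *.
  pose proof (pow2_ge_0 (p * (p - 1) * Rpower (k s) (p - 2) * Derive k s)). nra.
Qed.

End KillingField.

Definition killing_axis (p a : R) (g : R -> v3) : v3 := vscale (/ sqrt a) (killing_field p g 0).

Section KillingAxis.

Variables (p a : R) (g : R -> v3).
Hypothesis p_neq1 : p <> 1.
Hypothesis g_elastic : p_elastic p g.
Hypothesis k_first_integral : first_integral p a (geod_curv g).

Let e := killing_axis p a g.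

Let a_pos : 0 < a.
Proof.
  pose proof (killing_field_curve_coord_bound p a g g_elastic k_first_integral 0 p_neq1).
  pose proof (pow2_ge_0 (p * Rpower (geod_curv g 0) (p - 1))). lra.
Qed.

Let sqrt_a_pos : 0 < sqrt a.
Proof. apply sqrt_lt_R0, a_pos. Qed.

Let sqrt_a_sqr : sqrt a * sqrt a = a.
Proof. apply sqrt_sqrt, Rlt_le, a_pos. Qed.

Lemma killing_axis_unit : dot e e = 1.
Proof.
  unfold e, killing_axis. rewrite dot_vscalel, dot_comm, dot_vscalel.
  rewrite (killing_field_norm p a g) by auto.
  rewrite <- sqrt_a_sqr at 3. field. lra.
Qed.

Lemma dot_curve_killing_axis s : dot (g s) e = p * Rpower (geod_curv g s) (p - 1) / sqrt a.
Proof.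
  unfold e, killing_axis. rewrite dot_comm, dot_vscalel, dot_comm, <- (killing_field_constant p g g_elastic s).
  destruct (killing_field_coords p g g_elastic s) as [-> _]. field. lra.
Qed.

Lemma dot_normal_killing_axis s : dot (normal g s) e = (1 - p) * Rpower (geod_curv g s) p / sqrt a.
Proof.
  unfold e, killing_axis. rewrite dot_comm, dot_vscalel, dot_comm, <- (killing_field_constant p g g_elastic s).
  destruct (killing_field_coords p g g_elastic s) as [_ [-> _]]. field. lra.
Qed.

Lemma dot_curve_killing_axis_bound s : dot (g s) e ^ 2 < 1.
Proof.
  rewrite dot_curve_killing_axis.
  pose proof (killing_field_curve_coord_bound p a g g_elastic k_first_integral s p_neq1).
  replace ((p * Rpower (geod_curv g s) (p - 1) / sqrt a) ^ 2)
    with ((p * Rpower (geod_curv g s) (p - 1)) ^ 2 / a) by (field_simplify_eq; [nra|lra]).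
  apply (Rmult_lt_reg_r a); [lra|]. field_simplify; lra.
Qed.

End KillingAxis.

(** * Cylindrical coordinates about an axis *)

Definition perp_unit (e x : v3) : v3 :=
  vscale (/ sqrt (1 - dot x e ^ 2)) (vsub x (vscale (dot x e) e)).

Definition rotate_about (e u : v3) (th : R) : v3 :=
  vadd (vscale (cos th) u) (vscale (sin th) (cross e u)).

Definition axial_point (e u : v3) (h th : R) : v3 :=
  vadd (vscale h e) (vscale (sqrt (1 - h ^ 2)) (rotate_about e u th)).

Lemma perp_unit_orthonormal e x : dot e e = 1 -> dot x x = 1 -> dot x e ^ 2 < 1 ->
  orthonormal2 e (perp_unit e x).
Proof.
  intros He Hx Hxe.
  assert (R2 : / sqrt (1 - dot x e ^ 2) * / sqrt (1 - dot x e ^ 2) = / (1 - dot x e ^ 2)).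
  { rewrite <- Rinv_mult, sqrt_sqrt; lra. }
  split; [auto|split]; unfold perp_unit.
  - set (r := / sqrt (1 - dot x e ^ 2)).
    transitivity (r * r * (dot x x - 2 * dot x e * dot x e + dot x e * dot x e * dot e e)); [v3_ring|].
    unfold r. rewrite R2, He, Hx. field. lra.
  - rewrite dot_comm, dot_vscalel, dot_vsubl, dot_vscalel, He. ring.
Qed.

Lemma perp_unit_decomp e x : dot x e ^ 2 < 1 ->
  x = vadd (vscale (dot x e) e) (vscale (sqrt (1 - dot x e ^ 2)) (perp_unit e x)).
Proof.
  intros Hxe. unfold perp_unit. rewrite vscaleA, Rinv_r, vscale1; [v3_ring|].
  apply Rgt_not_eq, sqrt_lt_R0. lra.
Qed.

Lemma dot_axial_point_cross e u h th : orthonormal2 e u ->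
  dot (axial_point e u h th) (cross e u) = sqrt (1 - h ^ 2) * sin th.
Proof.
  intros Heu. destruct (orthonormal2_cross e u Heu) as [Hn [Hne Hnu]].
  unfold axial_point, rotate_about.
  rewrite !dot_vaddl, !dot_vscalel, dot_vaddl, !dot_vscalel, Hn, (dot_comm e), Hne, (dot_comm u), Hnu.
  ring.
Qed.

(* [|q - m|^2] is constant because the generator [x |-> w (e x x)] is skew-symmetric. *)
Lemma rotation_ode_unique (e : v3) (w : R -> R) (q m : R -> v3) :
  is_derive_v3 q (fun s => vscale (w s) (cross e (q s))) ->
  is_derive_v3 m (fun s => vscale (w s) (cross e (m s))) ->
  q 0 = m 0 -> forall s, q s = m s.
Proof.
  intros Dq Dm E0 s.
  assert (D : forall s, is_derive (fun t => dot (vsub (q t) (m t)) (vsub (q t) (m t))) s 0).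
  { intros t. eapply is_derive_eq_val; [apply is_derive_dot; apply is_derive_v3_sub; eauto|].
    v3_ring. }
  apply vsub_eq0, dot_self_eq0.
  rewrite (is_derive_zero_const _ D s 0), E0.
  replace (vsub (m 0) (m 0)) with vzero by v3_ring. apply dot_vzeror.
Qed.

Lemma is_derive_rotate_about e u th th' : dot e e = 1 -> dot e u = 0 ->
  (forall s, is_derive th s (th' s)) ->
  is_derive_v3 (fun t => rotate_about e u (th t)) (fun s => vscale (th' s) (cross e (rotate_about e u (th s)))).
Proof.
  intros He Heu Dth. unfold rotate_about.
  eapply is_derive_v3_ext.
  - apply is_derive_v3_add; apply is_derive_v3_scale;
      [intros s; apply is_derive_cos_comp, Dth|apply is_derive_v3_const
      |intros s; apply is_derive_sin_comp, Dth|apply is_derive_v3_const].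
  - intros s. cbv beta.
    (* [e x (e x u) = - u] for a unit [u] orthogonal to the unit axis [e]. *)
    transitivity (vadd (vadd (vscale (- sin (th s) * th' s) (vscale (dot e e) u)) (vscale (cos (th s)) vzero))
                       (vadd (vscale (cos (th s) * th' s) (cross e u)) (vadd (vscale (sin (th s)) vzero)
                             (vscale (sin (th s) * th' s) (vscale (dot e u) e))))).
    + rewrite He, Heu. v3_ring.
    + v3_ring.
Qed.

Lemma dot_perp_derivative_cross (x x' e : v3) (h r r' : R) :
  dot (vadd (vscale r' (vsub x (vscale h e))) (vscale r (vsub x' (vadd (vscale (dot x' e) e) (vscale h vzero)))))
      (cross e (vscale r (vsub x (vscale h e)))) = r * r * dot (cross x x') e.
Proof. v3_ring. Qed.

Lemma lincomb3_third (u v n : v3) c : lincomb3 0 u 0 v c n = vscale c n.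
Proof. v3_ring. Qed.

Lemma vadd_vscale1_vscale0 (u v : v3) : u = vadd (vscale 1 u) (vscale 0 v).
Proof. v3_ring. Qed.

Section AxialRepresentation.

Variables (g g' : R -> v3) (e : v3).
Hypothesis g_derive : is_derive_v3 g g'.
Hypothesis g_sphere : on_sphere g.
Hypothesis e_unit : dot e e = 1.
Hypothesis g_off_axis : forall s, dot (g s) e ^ 2 < 1.

Let h (t : R) : R := dot (g t) e.
Let q (t : R) : v3 := perp_unit e (g t).
Let w (s : R) : R := dot (cross (g s) (g' s)) e / (1 - h s ^ 2).

Let one_minus_h2_pos s : 0 < 1 - h s ^ 2.
Proof. unfold h. specialize (g_off_axis s). lra. Qed.

Let q_orthonormal s : orthonormal2 e (q s).
Proof. apply perp_unit_orthonormal; auto. Qed.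

Let q_unit s : dot (q s) (q s) = 1.
Proof. apply q_orthonormal. Qed.

Let q_perp s : dot (q s) e = 0.
Proof. rewrite dot_comm. apply q_orthonormal. Qed.

Lemma is_derive_perp_unit : is_derive_v3 q (fun s => vscale (w s) (cross e (q s))).
Proof.
  set (ir := fun t => / sqrt (1 - h t ^ 2)).
  assert (Dh : forall s, is_derive h s (dot (g' s) e)).
  { intros s. eapply is_derive_eq_val.
    - apply (is_derive_dot g g' (fun _ => e) (fun _ => vzero) s g_derive (is_derive_v3_const e)).
    - rewrite dot_vzeror. ring_R. }
  assert (Dir : forall s, is_derive ir s (Derive ir s)).
  { intros s. apply Derive_correct. eexists. apply is_derive_inv.
    - apply Derive_correct. eexists. apply is_derive_sqrt; [|auto].
      apply is_derive_Rminus; [apply is_derive_Rconst|].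
      apply (is_derive_ext (fun t => h t * h t)); [intros; simpl; ring|].
      apply is_derive_Rmult; apply Dh.
    - apply Rgt_not_eq, sqrt_lt_R0, one_minus_h2_pos. }
  set (q' := fun s => vadd (vscale (Derive ir s) (vsub (g s) (vscale (h s) e)))
     (vscale (ir s) (vsub (g' s) (vadd (vscale (dot (g' s) e) e) (vscale (h s) vzero))))).
  assert (Dq : is_derive_v3 q q').
  { apply is_derive_v3_scale; auto. apply is_derive_v3_sub; auto.
    apply is_derive_v3_scale; auto. apply is_derive_v3_const. }
  eapply is_derive_v3_ext; [exact Dq|]. intros s.
  assert (Ce : dot (q' s) e = 0).
  { pose proof (is_derive_dot q q' (fun _ => e) (fun _ => vzero) s Dq (is_derive_v3_const e)) as D.
    apply (is_derive_of_const _ 0) in D; [|intros; apply q_perp].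
    cbv beta in D. rewrite dot_vzeror in D. lra. }
  assert (Cq : dot (q' s) (q s) = 0).
  { pose proof (is_derive_dot q q' q q' s Dq Dq) as D.
    apply (is_derive_of_const _ 1) in D; [|intros; apply q_unit].
    pose proof (dot_comm (q s) (q' s)). lra. }
  assert (Cn : dot (q' s) (cross e (q s)) = w s).
  { assert (R2 : ir s * ir s = / (1 - h s ^ 2)).
    { unfold ir. rewrite <- Rinv_mult, sqrt_sqrt; [auto|apply Rlt_le, one_minus_h2_pos]. }
    transitivity (ir s * ir s * dot (cross (g s) (g' s)) e); [apply dot_perp_derivative_cross|].
    rewrite R2. unfold w. field. apply Rgt_not_eq, one_minus_h2_pos. }
  rewrite (orthonormal2_decomp e (q s) (q' s)), Ce, Cq, Cn by auto. apply lincomb3_third.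
Qed.

Lemma axial_representation (th : R -> R) :
  th 0 = 0 -> (forall s, is_derive th s (w s)) ->
  forall s, g s = axial_point e (perp_unit e (g 0)) (h s) (th s).
Proof.
  intros th0 Dth s.
  assert (E : forall s, q s = rotate_about e (q 0) (th s)).
  { apply (rotation_ode_unique e w).
    - apply is_derive_perp_unit.
    - apply is_derive_rotate_about; auto. apply q_orthonormal.
    - unfold rotate_about. rewrite th0, cos_0, sin_0. apply vadd_vscale1_vscale0. }
  unfold axial_point. rewrite <- E. apply perp_unit_decomp, g_off_axis.
Qed.

End AxialRepresentation.

(** * Closed curves in cylindrical coordinates *)

Lemma periodic_nat_multiple (f : R -> R) rho : (forall t, f (t + rho) = f t) ->
  forall n t, f (t + INR n * rho) = f t.
Proof.
  intros P n. induction n; intros t.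
  - simpl. rewrite Rmult_0_l, Rplus_0_r; auto.
  - rewrite S_INR. replace (t + (INR n + 1) * rho) with ((t + INR n * rho) + rho) by ring.
    rewrite P; auto.
Qed.

Lemma minimal_period_multiple (f : R -> R) rho L : minimal_period f rho -> 0 < L ->
  (forall s, f (s + L) = f s) -> exists n : nat, (1 <= n)%nat /\ L = INR n * rho.
Proof.
  intros [Hr [Pr Mr]] HL PL.
  destruct (nfloor_ex (L / rho)) as [n [N1 N2]]; [apply Rlt_le, Rdiv_lt_0_compat; auto|].
  assert (T1 : INR n * rho <= L).
  { apply (Rmult_le_compat_r rho) in N1; [|lra]. unfold Rdiv in N1. rewrite Rmult_assoc, Rinv_l in N1; lra. }
  assert (T2 : L < INR n * rho + rho).
  { apply (Rmult_lt_compat_r rho) in N2; [|lra]. unfold Rdiv in N2. rewrite Rmult_assoc, Rinv_l in N2; lra. }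
  assert (EL : L = INR n * rho).
  { destruct (Rle_lt_or_eq_dec _ _ T1) as [Hlt|Heq]; auto.
    exfalso. destruct (Mr (L - INR n * rho)) as [s Hs]; [lra|].
    apply Hs. rewrite <- (periodic_nat_multiple f rho Pr n (s + (L - INR n * rho))).
    replace (s + (L - INR n * rho) + INR n * rho) with (s + L) by ring. auto. }
  exists n. split; auto. destruct n; [simpl in EL; lra|lia].
Qed.

Lemma cos_sin_add_2PI_IZR x z : cos (x + 2 * PI * IZR z) = cos x /\ sin (x + 2 * PI * IZR z) = sin x.
Proof.
  assert (S1 : sin (IZR z * PI) = 0) by (apply sin_eq_0_1; eauto).
  assert (S2 : sin (2 * PI * IZR z) = 0).
  { apply sin_eq_0_1. exists (2 * z)%Z. rewrite mult_IZR. ring. }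
  assert (C2 : cos (2 * PI * IZR z) = 1).
  { replace (2 * PI * IZR z) with (2 * (IZR z * PI)) by ring. rewrite cos_2a_sin, S1. ring. }
  rewrite cos_plus, sin_plus, S2, C2. split; ring.
Qed.

Lemma Q2R_nat_denominator (z : Z) (n : nat) : (1 <= n)%nat ->
  Q2R (Qmake z (Pos.of_nat n)) = IZR z / INR n.
Proof.
  intros Hn. unfold Q2R; cbn [Qnum Qden].
  rewrite <- (positive_nat_Z (Pos.of_nat n)), <- INR_IZR_INZ, Nat2Pos.id by lia. reflexivity.
Qed.

Section ClosureCriterion.

Variables (g : R -> v3) (e u : v3) (h th k : R -> R) (rho : R).
Hypothesis e_u_orthonormal : orthonormal2 e u.
Hypothesis g_axial : forall s, g s = axial_point e u (h s) (th s).
Hypothesis h_bound : forall s, h s ^ 2 < 1.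
Hypothesis th_0 : th 0 = 0.
Hypothesis k_rho : minimal_period k rho.
Hypothesis k_periodic_of_g : forall L, (forall t, g (t + L) = g t) -> forall s, k (s + L) = k s.
Hypothesis h_of_k : forall s1 s2, k s1 = k s2 -> h s1 = h s2.
Hypothesis th_additive : forall L, (forall t, k (t + L) = k t) -> forall s, th (s + L) = th s + th L.

Let rho_pos : 0 < rho.
Proof. apply k_rho. Qed.

Let k_periodic : forall t, k (t + rho) = k t.
Proof. apply k_rho. Qed.

Let th_nat_multiple n : th (INR n * rho) = INR n * th rho.
Proof.
  induction n.
  - simpl. rewrite Rmult_0_l, th_0. ring.
  - rewrite S_INR. replace ((INR n + 1) * rho) with (INR n * rho + rho) by ring.
    rewrite th_additive, IHn by auto. ring.
Qed.

Lemma closed_rotation_rational : closed_curve g -> exists q : Q, th rho = 2 * PI * Q2R q.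
Proof.
  intros [L [HL Pg]].
  destruct (minimal_period_multiple k rho L k_rho HL (k_periodic_of_g L Pg)) as [n [Hn EL]].
  (* The (e x u)-coordinate of [g L = g 0] gives [sin (th L) = 0]. *)
  assert (S : sin (th L) = 0).
  { assert (gL : g L = g 0) by (rewrite <- (Rplus_0_l L) at 1; apply Pg).
    pose proof (f_equal (fun x => dot x (cross e u)) gL) as A. cbv beta in A.
    rewrite !g_axial, !dot_axial_point_cross, th_0, sin_0 in A by auto.
    assert (0 < sqrt (1 - h L ^ 2)) by (apply sqrt_lt_R0; specialize (h_bound L); lra).
    nra. }
  rewrite EL, th_nat_multiple in S. destruct (sin_eq_0_0 _ S) as [z Hz].
  exists (Qmake z (Pos.of_nat (2 * n))). rewrite Q2R_nat_denominator by lia.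
  assert (0 < INR n) by (apply lt_0_INR; lia).
  rewrite mult_INR. simpl (INR 2). apply (Rmult_eq_reg_l (INR n)); [|lra].
  rewrite Hz. field. lra.
Qed.

Lemma rotation_rational_closed : (exists q : Q, th rho = 2 * PI * Q2R q) -> closed_curve g.
Proof.
  intros [q Hq]. set (n := Pos.to_nat (Qden q)).
  assert (Hn : 0 < INR n) by apply pos_INR_nat_of_P.
  assert (kL : forall t, k (t + INR n * rho) = k t) by (apply periodic_nat_multiple; auto).
  assert (thL : th (INR n * rho) = 2 * PI * IZR (Qnum q)).
  { rewrite th_nat_multiple, Hq. unfold Q2R.
    replace (IZR (Z.pos (Qden q))) with (INR n) by (unfold n; rewrite INR_IZR_INZ, positive_nat_Z; auto).
    field. lra. }
  exists (INR n * rho). split; [apply Rmult_lt_0_compat; auto|]. intros s.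
  rewrite !g_axial, (h_of_k (s + INR n * rho) s (kL s)), th_additive, thL by auto.
  destruct (cos_sin_add_2PI_IZR (th s) (Qnum q)) as [C S]. unfold axial_point, rotate_about.
  rewrite C, S. reflexivity.
Qed.

Lemma closed_curve_iff_rotation_rational :
  closed_curve g <-> exists q : Q, th rho = 2 * PI * Q2R q.
Proof. split; [apply closed_rotation_rational|apply rotation_rational_closed]. Qed.

End ClosureCriterion.

(** * The angle [Lambda] *)

Definition Lambda_integrand (p a : R) (k : R -> R) (s : R) : R :=
  Rpower (k s) (2 - p) / (a * Rpower (k s) (2 * (1 - p)) - p ^ 2).

Lemma Lambda_denominator_factor p a x : 0 < x ->
  a * Rpower x (2 * (1 - p)) - p ^ 2 = Rpower x (2 * (1 - p)) * (a - (p * Rpower x (p - 1)) ^ 2).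
Proof.
  intros Hx.
  assert (E : Rpower x (2 * (1 - p)) * Rpower x (p - 1) ^ 2 = 1).
  { rewrite <- Rpower_double, <- Rpower_plus, (Rpower_exponent_eq _ _ 0) by ring. apply Rpower_O; auto. }
  transitivity (a * Rpower x (2 * (1 - p)) - p ^ 2 * (Rpower x (2 * (1 - p)) * Rpower x (p - 1) ^ 2));
    [rewrite E|]; ring.
Qed.

Lemma Lambda_integrand_eq p a x : 0 < x -> (p * Rpower x (p - 1)) ^ 2 < a ->
  (1 - p) * sqrt a * (Rpower x (2 - p) / (a * Rpower x (2 * (1 - p)) - p ^ 2))
  = ((1 - p) * Rpower x p / sqrt a) / (1 - (p * Rpower x (p - 1) / sqrt a) ^ 2).
Proof.
  intros Hx H.
  assert (Ha : 0 < a) by (pose proof (pow2_ge_0 (p * Rpower x (p - 1))); lra).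
  assert (Hs : 0 < sqrt a) by (apply sqrt_lt_R0; auto).
  assert (Hs2 : sqrt a * sqrt a = a) by (apply sqrt_sqrt; lra).
  assert (E : Rpower x (2 - p) = Rpower x p * Rpower x (2 * (1 - p))).
  { rewrite <- Rpower_plus. apply Rpower_exponent_eq; ring. }
  assert (D : 0 < a - (p * Rpower x (p - 1)) ^ 2) by lra.
  pose proof (Rpower_pos x (2 * (1 - p))).
  rewrite E, Lambda_denominator_factor by auto. set (r := sqrt a) in *. rewrite <- Hs2 in D |- *.
  field. repeat split; lra.
Qed.

Lemma is_derive_Lambda p a k s : Cinf k -> (forall t, 0 < k t) ->
  (forall t, (p * Rpower (k t) (p - 1)) ^ 2 < a) ->
  is_derive (fun x => Lambda p a x k) s ((1 - p) * sqrt a * Lambda_integrand p a k s).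
Proof.
  intros Ck Pk Hb.
  assert (Dint : forall t, ex_derive (Lambda_integrand p a k) t).
  { intros t. eexists. unfold Lambda_integrand. apply is_derive_div.
    - apply is_derive_Rpower_Cinf; auto.
    - apply is_derive_Rminus; [apply is_derive_scal, is_derive_Rpower_Cinf; auto|apply is_derive_Rconst].
    - rewrite Lambda_denominator_factor by auto.
      apply Rgt_not_eq, Rmult_lt_0_compat; [apply Rpower_pos|specialize (Hb t); lra]. }
  assert (Cint : forall t, continuous (Lambda_integrand p a k) t).
  { intros t. apply (@ex_derive_continuous R_AbsRing R_NormedModule), Dint. }
  unfold Lambda. apply is_derive_scal.
  apply (is_derive_RInt (Lambda_integrand p a k) (fun x => RInt (Lambda_integrand p a k) 0 x) 0); auto.
  apply filter_forall. intros b. apply (@RInt_correct R_CompleteNormedModule).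
  apply (@ex_RInt_continuous R_CompleteNormedModule). auto.
Qed.

Lemma Lambda_0 p a k : Lambda p a 0 k = 0.
Proof. unfold Lambda. rewrite RInt_point. unfold zero; simpl. ring. Qed.

Lemma Lambda_add_period p a k L : Cinf k -> (forall t, 0 < k t) ->
  (forall t, (p * Rpower (k t) (p - 1)) ^ 2 < a) -> (forall t, k (t + L) = k t) ->
  forall s, Lambda p a (s + L) k = Lambda p a s k + Lambda p a L k.
Proof.
  intros Ck Pk Hb PL s.
  rewrite (is_derive_periodic_increment (fun x => Lambda p a x k)
    (fun x => (1 - p) * sqrt a * Lambda_integrand p a k x) L), Lambda_0; [ring| |].
  - intros t. apply is_derive_Lambda; auto.
  - intros t. unfold Lambda_integrand. rewrite PL. reflexivity.
Qed.

Lemma elastic_axial_representation p a g : p <> 1 -> p_elastic p g -> first_integral p a (geod_curv g) ->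
  forall s, g s = axial_point (killing_axis p a g) (perp_unit (killing_axis p a g) (g 0))
                              (dot (g s) (killing_axis p a g)) (Lambda p a s (geod_curv g)).
Proof.
  intros Hp1 He Hfi. pose proof He as [Hs [Hsp [_ [Hpos _]]]].
  apply (axial_representation g (dcurve g) (killing_axis p a g) (is_derive_curve g Hs) Hsp
           (killing_axis_unit p a g Hp1 He Hfi) (dot_curve_killing_axis_bound p a g Hp1 He Hfi)).
  - apply Lambda_0.
  - intros s. eapply is_derive_eq_val.
    + apply is_derive_Lambda; [apply Cinf_geod_curv; auto|auto|].
      intros t; apply killing_field_curve_coord_bound; auto.
    + change (cross (g s) (dcurve g s)) with (normal g s).
      rewrite dot_curve_killing_axis, dot_normal_killing_axis by auto.
      apply Lambda_integrand_eq; auto. apply killing_field_curve_coord_bound; auto.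
Qed.

Theorem mainTheorem6 (p a rho : R) (g : R -> v3) :
  0 < p < 1 ->
  a_star p < a ->
  p_elastic p g ->
  ~ (exists c : R, forall s, geod_curv g s = c) ->
  first_integral p a (geod_curv g) ->
  minimal_period (geod_curv g) rho ->
  (closed_curve g <-> exists q : Q, Lambda p a rho (geod_curv g) = 2 * PI * Q2R q).
Proof.
  (* [a > a_*] and non-constancy of [k] only guarantee that such curves exist:
     [a > 0] follows from the first integral and non-constancy from [minimal_period]. *)
  intros Hp _ He _ Hfi Hmp.
  assert (Hp1 : p <> 1) by lra.
  pose proof He as [Hs [Hsp [_ [Hpos _]]]].
  apply (closed_curve_iff_rotation_rational g (killing_axis p a g) (perp_unit (killing_axis p a g) (g 0))
           (fun s => dot (g s) (killing_axis p a g)) (fun s => Lambda p a s (geod_curv g)) (geod_curv g) rho).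
  - apply perp_unit_orthonormal; [apply killing_axis_unit|apply Hsp|apply dot_curve_killing_axis_bound]; auto.
  - apply elastic_axial_representation; auto.
  - intros; apply dot_curve_killing_axis_bound; auto.
  - apply Lambda_0.
  - exact Hmp.
  - intros L PL. apply geod_curv_periodic; auto.
  - intros s1 s2 E. rewrite !dot_curve_killing_axis, E by auto. reflexivity.
  - intros L PL. apply Lambda_add_period; auto.
    + apply Cinf_geod_curv; auto.
    + intros t; apply killing_field_curve_coord_bound; auto.
Qed.
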